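(* Let $n\ge m\ge 2$ and $d$ be positive integers with $n+1\le\binom{d+m-2}{m-1}$. Then the maximal and minimal $h$-vectors of Perazzo algebras with invariants $n,m,d$ coincide (i.e. all such Perazzo algebras have the same Hilbert function) if and only if \[ \binom{d+m-3}{m-1}\le n+1. \]
   Context: A Perazzo form of degree $d$ is $F=X_0p_0+\dots+X_np_n+G\in K[X_0,\dots,X_n,U_1,\dots,U_m]_d$ ($K$ algebraically closed, char $0$) with $p_i\in K[U_1,\dots,U_m]_{d-1}$ algebraically dependent but linearly independent, $G\in K[U_1,\dots,U_m]_d$; $A_F=R/\operatorname{Ann}_RF$. With $\alpha_i=\binom{m+i-1}{m-1}$, $\beta_i=\binom{d+m-i-1}{m-1}$, $\gamma_i=(n+1)\binom{m+i-2}{m-1}$, the maximal $h$-vector is symmetric with $i$-th entry $\min\{\alpha_i+\beta_i,\alpha_i+\gamma_i\}$ and the minimal $h$-vector is symmetric with $i$-th entry $\min\{2(n+1),\alpha_i+n+1,\alpha_i+\beta_i\}$ for $1\le i\le d/2$ (and $1$ for $i=0$). *)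

From mathcomp Require Import all_boot.
Set Implicit Arguments. Unset Strict Implicit. Unset Printing Implicit Defensive.

(* Invariants of a Perazzo form: n (so n+1 variables X_0..X_n), m (variables
   U_1..U_m), d (degree).  Following the paper's notation: *)
Definition pz_alpha (m i : nat) : nat := 'C(m + i - 1, m - 1).
Definition pz_beta (m d i : nat) : nat := 'C(d + m - i - 1, m - 1).
Definition pz_gamma (n m i : nat) : nat := (n + 1) * 'C(m + i - 2, m - 1).

Definition hmax (n m d i : nat) : nat :=
  let j := minn i (d - i) in
  if j == 0 then 1
  else minn (pz_alpha m j + pz_beta m d j) (pz_alpha m j + pz_gamma n m j).

Definition hmin (n m d i : nat) : nat :=
  let j := minn i (d - i) in
  if j == 0 then 1
  else minn (2 * (n + 1)) (minn (pz_alpha m j + n + 1) (pz_alpha m j + pz_beta m d j)).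

From mathcomp Require Import all_boot.
From mathcomp Require Import zify.

(* In each degree j with 1 <= j <= d/2 we have alpha_j <= beta_j and
   gamma_j >= n + 1, with equality exactly for j = 1.  Comparing the two
   minima, the entries agree in degree 1 and, for j >= 2, exactly when
   beta_j <= n + 1.  Since beta_j decreases in j, all entries agree iff
   beta_2 = C(d+m-3, m-1) <= n + 1 (vacuous when d <= 3, where this bound
   holds anyway). *)

Lemma minn_sum_eqE (a b g n : nat) : a <= b -> n + 1 <= g ->
  (minn (a + b) (a + g) == minn (2 * (n + 1)) (minn (a + n + 1) (a + b)))
  = (b <= n + 1) || (a <= n + 1) && (g == n + 1).
Proof.
move=> le_ab le_ng.
case: (boolP (b <= n + 1)) => [le_bn | /negP lt_nb] /=; first by apply/eqP; lia.
case: (g =P n + 1) => [-> | ne_gn]; rewrite ?andbT ?andbF.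
  by apply/eqP/idP; lia.
by apply/negbTE/eqP; lia.
Qed.

Lemma bin_predn_r (k : nat) : 0 < k -> 'C(k, k - 1) = k.
Proof. by move=> k_gt0; rewrite bin_sub // bin1. Qed.

Section PerazzoInvariants.

Context {n m d : nat}.
Hypothesis m_ge2 : 2 <= m.

Lemma pz_alpha1 : pz_alpha m 1 = m.
Proof. by rewrite /pz_alpha addnK bin_predn_r //; lia. Qed.

Lemma pz_gamma1 : pz_gamma n m 1 = n + 1.
Proof. by rewrite /pz_gamma (_ : m + 1 - 2 = m - 1) ?binn ?muln1 //; lia. Qed.

Lemma pz_gamma_gt {j : nat} : 2 <= j -> n + 1 < pz_gamma n m j.
Proof.
move=> j_ge2; rewrite /pz_gamma.
have : 'C(m, m - 1) <= 'C(m + j - 2, m - 1) by apply: leq_bin2l; lia.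
by rewrite bin_predn_r; [nia | lia].
Qed.

Lemma pz_alpha_le_beta (j : nat) : j <= d - j -> pz_alpha m j <= pz_beta m d j.
Proof. by move=> le_j; apply: leq_bin2l; lia. Qed.

Lemma pz_beta_monotone (j k : nat) : j <= k -> pz_beta m d k <= pz_beta m d j.
Proof. by move=> le_jk; apply: leq_bin2l; lia. Qed.

Lemma pz_beta2 : pz_beta m d 2 = 'C(d + m - 3, m - 1).
Proof. by rewrite /pz_beta (_ : d + m - 2 - 1 = d + m - 3) //; lia. Qed.

Hypothesis m_le_n1 : m <= n + 1.
Hypothesis beta1_ge : n + 1 <= 'C(d + m - 2, m - 1).

Lemma hmax_eq_hminE (i : nat) :
  (hmax n m d i == hmin n m d i)
  = (minn i (d - i) <= 1) || (pz_beta m d (minn i (d - i)) <= n + 1).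
Proof.
rewrite /hmax /hmin; set j := minn i (d - i).
have [-> // | j_ne0] := eqVneq j 0.
have le_j : j <= d - j by rewrite /j; lia.
case: (leqP j 1) => [le_j1 | lt_1j].
- have -> : j = 1 by lia.
  rewrite minn_sum_eqE ?pz_alpha_le_beta ?pz_gamma1 //; last by lia.
  by rewrite pz_alpha1 m_le_n1 eqxx orbT.
- rewrite minn_sum_eqE ?pz_alpha_le_beta ?(ltnW (pz_gamma_gt lt_1j)) //.
  by rewrite (gtn_eqF (pz_gamma_gt lt_1j)) andbF orbF.
Qed.

End PerazzoInvariants.

Theorem proposition4p6 (n m d : nat) :
  2 <= m -> m <= n -> 0 < d -> n + 1 <= 'C(d + m - 2, m - 1) ->
  ((forall i, i <= d -> hmax n m d i = hmin n m d i) <->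
   'C(d + m - 3, m - 1) <= n + 1).
Proof.
move=> m_ge2 m_le_n _ beta1_ge.
have m_le_n1 : m <= n + 1 by lia.
have entryE := hmax_eq_hminE m_ge2 m_le_n1 beta1_ge.
split=> [hmax_hmin | beta2_le].
- case: (leqP d 3) => [le_d3 | lt_3d].
    apply: (@leq_trans 'C(m, m - 1)); first by apply: leq_bin2l; lia.
    by rewrite bin_predn_r //; lia.
  have /eqP := hmax_hmin 2 (ltnW (ltnW lt_3d)).
  by rewrite entryE (_ : minn 2 (d - 2) = 2) ?pz_beta2 //; lia.
- move=> i _; apply/eqP; rewrite entryE.
  case: leqP => //= lt_1j.
  by apply: leq_trans beta2_le; rewrite -pz_beta2 //; apply: pz_beta_monotone.
Qed.
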